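(* Consider a $(1+\varepsilon)$-adversarial sampling process (as in the context) on $k$ elements with $0<\varepsilon<1/2$ and initial weights normalized so that $\sum_{e\in E_0}w_0(e)=k$, against an arbitrary adversary. Then for every $\ell\in\{1,2,\ldots,\lfloor|S_0|/2\rfloor\}$, the probability that $\ell$ is bad is at most $e^{-\ell/40}$.
   Context: The $(1+\varepsilon)$-adversarial sampling process: initially there is a set $E_0$ of $k$ elements with nonnegative weights $w_0$. In round $i$, let $D_i$ be the distribution on $E_i$ with $\Pr_{D_i}(e)=w_i(e)/\sum_{e'\in E_i}w_i(e')$; an adversary chooses any distribution $D_i^\varepsilon$ on $E_i$ with $(1-\varepsilon)\Pr_{D_i}(e)\le\Pr_{D_i^\varepsilon}(e)\le(1+\varepsilon)\Pr_{D_i}(e)$ for all $e$; an element $e_{i+1}$ is sampled from $D_i^\varepsilon$ and $E_{i+1}=E_i\setminus\{e_{i+1}\}$; then the adversary chooses weights $0\le w_{i+1}(e)\le w_i(e)$ for $e\in E_{i+1}$. The adversary is a fixed strategy whose choices may depend on the history; probabilities are over the sampling. Notation: for $E\subseteq E_i$, $w_i(E)=\sum_{e\in E}w_i(e)$. For each $i$, partition $E_i=B_i\sqcup M_i\sqcup S_i$ where $e\in B_i$ iff $w_i(e)\ge 80$, $e\in M_i$ iff $2<w_i(e)<80$, and $e\in S_i$ iff $w_i(e)\le 2$. For $\ell\in\{1,\ldots,|S_0|\}$, $i_\ell$ is the smallest $i$ with $|S_i|=\ell$. An $\ell\in\{1,\ldots,\lfloor|S_0|/2\rfloor\}$ is called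 bad if both $w_{i_{2\ell}}(B_{i_{2\ell}})\le 8\ell$ and $w_{i_\ell}(B_{i_\ell})>4\ell$; otherwise it is good. *)

From HB Require Import structures.
From mathcomp Require Import all_boot all_order all_algebra.
From mathcomp Require Import all_classical all_reals all_analysis.
Set Implicit Arguments. Unset Strict Implicit. Unset Printing Implicit Defensive.
Import Order.TTheory GRing.Theory Num.Theory.
Local Open Scope ring_scope.

(* A history h : seq 'I_k is the sequence of sampled
   elements e_1, ..., e_i.  The adversary's strategy is given by
   - dist h : the distribution D_i^eps chosen after history h (|h| = i),
   - wt h   : the weights w_i chosen after history h (wt [::] = w_0). *)

Definition remaining k (h : seq 'I_k) : {set 'I_k} := [set e | e \notin h].

Definition totw (R : realType) k (w : 'I_k -> R) (A : {set 'I_k}) : R :=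
  \sum_(e in A) w e.

(* The constraints of the (1+eps)-adversarial sampling process, imposed at
   every (possibly) reachable history h (uniq, fewer than k samples). *)
Definition valid_adversary (R : realType) k (eps : R)
  (dist wt : seq 'I_k -> 'I_k -> R) : Prop :=
  (forall e, 0 <= wt [::] e) /\
  forall h : seq 'I_k, uniq h -> (size h < k)%N ->
    [/\
        (forall e, 0 <= dist h e),
        (forall e, e \in h -> dist h e = 0),
        \sum_e dist h e = 1,
        (* multiplicative closeness to D_i (D_i defined when w_i(E_i) > 0) *)
        (0 < totw (wt h) (remaining h) ->
          forall e, e \notin h ->
            (1 - eps) * (wt h e / totw (wt h) (remaining h)) <= dist h e /\
            dist h e <= (1 + eps) * (wt h e / totw (wt h) (remaining h)))
      &
        (forall e x, e \notin h -> x \notin h -> x != e ->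
           0 <= wt (rcons h e) x /\ wt (rcons h e) x <= wt h x)].

Fixpoint prob_from (R : realType) k (dist : seq 'I_k -> 'I_k -> R)
  (A : seq 'I_k -> bool) (n : nat) (h : seq 'I_k) : R :=
  match n with
  | 0 => (A h)%:R
  | n'.+1 => \sum_e dist h e * prob_from dist A n' (rcons h e)
  end.

Definition prob (R : realType) k (dist : seq 'I_k -> 'I_k -> R)
  (A : seq 'I_k -> bool) : R := prob_from dist A k [::].

(* Along a complete history h, round i has history take i h. *)
Definition Sset (R : realType) k (wt : seq 'I_k -> 'I_k -> R) (h : seq 'I_k)
  (i : nat) : {set 'I_k} :=
  [set e | (e \notin take i h) && (wt (take i h) e <= 2)].

Definition Bset (R : realType) k (wt : seq 'I_k -> 'I_k -> R) (h : seq 'I_k)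
  (i : nat) : {set 'I_k} :=
  [set e | (e \notin take i h) && (80 <= wt (take i h) e)].

Definition first_idx (R : realType) k (wt : seq 'I_k -> 'I_k -> R)
  (h : seq 'I_k) (l : nat) : nat :=
  find (fun i => #|Sset wt h i| == l) (iota 0 k.+1).

Definition wB (R : realType) k (wt : seq 'I_k -> 'I_k -> R) (h : seq 'I_k)
  (i : nat) : R := totw (wt (take i h)) (Bset wt h i).

Definition is_bad (R : realType) k (wt : seq 'I_k -> 'I_k -> R) (l : nat)
  (h : seq 'I_k) : bool :=
  (wB wt h (first_idx wt h (2 * l)) <= 8 * l%:R) &&
  (4 * l%:R < wB wt h (first_idx wt h l)).

From HB Require Import structures.
From mathcomp Require Import all_boot all_order all_algebra.
From mathcomp Require Import all_classical all_reals all_analysis.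
From mathcomp Require Import zify ring lra.
Set Implicit Arguments. Unset Strict Implicit. Unset Printing Implicit Defensive.
Import Order.TTheory GRing.Theory Num.Theory.
Local Open Scope ring_scope.

(* Proof idea: optional stopping for the potential
     pot(s, b) = exp ((l - min(s, 2l)) / 10 + (b - 4l) / 80)  if b > 4l, else 0,
   evaluated at s = |S_i| and b = w_i(B_i).  Since weights only decrease, a
   round lowers s only by sampling an element of S_i, which multiplies pot by at
   most e^(1/10) <= 1 + 1/9, and sampling an element of B_i lowers b by at least
   80, which multiplies pot by at most e^(-1) <= 1/2.  While s <= 2l < b/2, the
   (1+eps)-closeness makes the first event less than (1+eps)/(1-eps) * 2s/b < 3
   times as likely as the second, and 3/9 < 1/2; so pot is a supermartingale
   from round i_(2l) on.  At that round pot <= e^(-l/20) unless b > 8l already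
   rules l out, whereas pot >= 1 at round i_l if l is bad. *)

Lemma expR_le_inv1B (R : realType) (x : R) : x < 1 -> expR x <= (1 - x)^-1.
Proof.
move=> x_lt1; have := expR_ge1Dx (- x); rewrite expRN => le1x.
rewrite -[X in _ <= X]div1r ler_pdivlMr ?subr_gt0 //.
rewrite -[X in _ <= X](mulVf (lt0r_neq0 (expR_gt0 x))) mulrC.
by rewrite ler_wpM2r // ltW ?expR_gt0.
Qed.

Lemma takel_rcons (T : Type) (s : seq T) x n : (n <= size s)%N ->
  take n (rcons s x) = take n s.
Proof. by move=> ns; rewrite -cats1 takel_cat. Qed.

Section FirstHit.
Variable f : nat -> nat.

Definition first_hit (n m : nat) : nat := find (fun i => f i == m) (iota 0 n.+1).

Lemma first_hit_le n m j : (j <= n)%N -> f j = m -> (first_hit n m <= j)%N.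
Proof.
move=> jn fj; rewrite leqNgt; apply/negP => /(before_find 0%N).
by rewrite nth_iota // add0n fj eqxx.
Qed.

Lemma first_hit_leS n m : (first_hit n m <= n.+1)%N.
Proof. by rewrite -[n.+1](size_iota 0) find_size. Qed.

Lemma first_hit_eq n m : (first_hit n m <= n)%N -> f (first_hit n m) = m.
Proof.
move=> hn; have has_m : has (fun i => f i == m) (iota 0 n.+1).
  by rewrite has_find size_iota ltnS.
by have /eqP := nth_find 0%N has_m; rewrite nth_iota ?add0n.
Qed.

Lemma first_hitS n m : first_hit n.+1 m =
  if (first_hit n m <= n)%N then first_hit n m else (n.+1 + (f n.+1 != m))%N.
Proof.
rewrite /first_hit -addn1 iotaD find_cat has_find size_iota ltnS add0n /=.
by case: (f n.+1 == m); case: ifP.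
Qed.

Variable n : nat.
Hypothesis slow_descent : forall j, (j < n)%N -> (f j <= f j.+1 + 1)%N.

Lemma first_hit_le_between m j : (j <= n)%N -> (f j <= m <= f 0)%N ->
  (first_hit n m <= j)%N.
Proof.
elim: j => [|j IH] jn /andP[fjm mf0].
  by rewrite (@first_hit_le n m 0) //; apply/eqP; rewrite eqn_leq fjm.
have [fj_le|fj_gt] := leqP (f j) m.
  by rewrite ltnW // ltnS IH ?fj_le // ltnW.
by apply: first_hit_le => //; have := slow_descent jn; lia.
Qed.

End FirstHit.

Lemma eq_first_hit f g n m : (forall j, (j <= n)%N -> f j = g j) ->
  first_hit f n m = first_hit g n m.
Proof.
move=> fg; apply: eq_in_find => j; rewrite mem_iota add0n ltnS => /andP[_ jn].
by rewrite fg.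
Qed.

Section AdversarialSampling.
Variables (R : realType) (k : nat) (eps : R) (dist wt : seq 'I_k -> 'I_k -> R).
Hypothesis adv : valid_adversary eps dist wt.
Implicit Types (h : seq 'I_k) (e x : 'I_k).

Lemma wt_ge0 h x : uniq h -> (size h <= k)%N -> x \notin h -> 0 <= wt h x.
Proof.
elim/last_ind: h x => [|h e _] x; first by case: adv.
rewrite rcons_uniq size_rcons mem_rcons in_cons negb_or => /andP[eh uh] hk.
move=> /andP[xe xh]; have [_ _ _ _ wt_step] := adv.2 h uh hk.
by have [] := wt_step e x eh xh xe.
Qed.

Lemma wt_rcons_le h e x : uniq (rcons h e) -> (size h < k)%N ->
  x \notin rcons h e -> wt (rcons h e) x <= wt h x.
Proof.
rewrite rcons_uniq mem_rcons in_cons negb_or => /andP[eh uh] hk /andP[xe xh].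
have [_ _ _ _ wt_step] := adv.2 h uh hk.
by have [] := wt_step e x eh xh xe.
Qed.

Definition small h := [set x | (x \notin h) && (wt h x <= 2)].
Definition big h := [set x | (x \notin h) && (80 <= wt h x)].
Definition bigw h := totw (wt h) (big h).

Lemma small_sub_remaining h : small h \subset remaining h.
Proof. by apply/fintype.subsetP => e; rewrite !inE => /andP[]. Qed.

Lemma big_sub_remaining h : big h \subset remaining h.
Proof. by apply/fintype.subsetP => e; rewrite !inE => /andP[]. Qed.

Lemma small_big_disjoint h e : e \in small h -> e \notin big h.
Proof.
rewrite !inE => /andP[_ le2]; apply/negP => /andP[_ /le_trans/(_ le2)].
by rewrite ler_nat.
Qed.

Lemma totw_small_le h : totw (wt h) (small h) <= 2 * #|small h|%:R.
Proof.
apply: (@le_trans _ _ (\sum_(e in small h) 2)); last by rewrite sumr_const mulr_natr.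
by apply: ler_sum => e; rewrite inE => /andP[].
Qed.

Lemma card_small_rcons h e : uniq (rcons h e) -> (size h < k)%N ->
  (#|small h| <= #|small (rcons h e)| + (e \in small h))%N.
Proof.
move=> uhe hk; rewrite (cardsD1 e (small h)) addnC leq_add2r.
apply: subset_leq_card; apply/fintype.subsetP => x.
rewrite !inE => /andP[xe /andP[xh le2]].
have xhe : x \notin rcons h e by rewrite mem_rcons in_cons negb_or xe.
by rewrite xhe (le_trans (wt_rcons_le uhe hk xhe)).
Qed.

Lemma bigw_rcons h e : uniq (rcons h e) -> (size h < k)%N ->
  bigw (rcons h e) <= bigw h - 80 * (e \in big h)%:R.
Proof.
move=> uhe hk; apply: (@le_trans _ _ (\sum_(x in big h :\ e) wt h x)).
  rewrite /bigw /totw [X in X <= _]big_mkcond [X in _ <= X]big_mkcond /=.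
  apply: ler_sum => x _; rewrite !inE mem_rcons in_cons negb_or.
  case: (eqVneq x e) => [->|xe] //=; case: (boolP (x \in h)) => //= xh.
  have xhe : x \notin rcons h e by rewrite mem_rcons in_cons negb_or xe.
  have le_wt := wt_rcons_le uhe hk xhe.
  case: ifP => [ge80|_]; first by rewrite (le_trans ge80 le_wt).
  by case: ifP => // ge80; lra.
case: (boolP (e \in big h)) => eB; last first.
  rewrite mulr0 subr0 /bigw /totw; suff -> : big h :\ e = big h by [].
  apply/setP => x; rewrite !inE; case: eqVneq => [->|] //=.
  by move: eB; rewrite inE => /negbTE.
rewrite mulr1 /bigw /totw (big_setD1 e eB) /=.
by move: eB; rewrite inE => /andP[_]; lra.
Qed.

Lemma card_remaining h : uniq h -> #|remaining h| = (k - size h)%N.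
Proof.
move=> uh; have <- : #|[set x in h]| = size h by rewrite cardsE (card_uniqP uh).
have -> : remaining h = ~: [set x in h] by apply/setP => x; rewrite !inE.
by rewrite cardsCs finset.setCK card_ord.
Qed.

Definition step_factor (a c : bool) : R := 1 + a%:R / 9 - c%:R / 2.

Lemma step_factor_ge0 a c : 0 <= step_factor a c.
Proof. by rewrite /step_factor; case: a; case: c => /=; lra. Qed.

Lemma expR_le_step_factor (a c : bool) : ~~ (a && c) ->
  expR (a%:R / 10 - c%:R) <= step_factor a c.
Proof.
rewrite /step_factor; case: a; case: c => //= _; rewrite ?(mul0r, subr0, sub0r, addr0).
- rewrite mul1r (_ : 1 + 1 / 9 = (1 - 10^-1)^-1); last by field.
  by apply: expR_le_inv1B; lra.
- rewrite (_ : 1 - 1 / 2 = (1 - -1)^-1); last by field.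
  by apply: expR_le_inv1B; lra.
- by rewrite expR0.
Qed.

Section Round.
Variable h : seq 'I_k.
Hypotheses (uh : uniq h) (hk : (size h < k)%N).

Lemma mean_le (P Q : 'I_k -> R) : (forall e, e \notin h -> P e <= Q e) ->
  \sum_e dist h e * P e <= \sum_e dist h e * Q e.
Proof.
have [d_ge0 d_h _ _ _] := adv.2 h uh hk.
move=> PQ; apply: ler_sum => e _; case: (boolP (e \in h)) => eh.
  by rewrite d_h // !mul0r.
by rewrite ler_wpM2l ?PQ.
Qed.

Lemma mean_const (c : R) : \sum_e dist h e * c = c.
Proof. by have [_ _ d_sum _ _] := adv.2 h uh hk; rewrite -mulr_suml d_sum mul1r. Qed.

Lemma bigw_le_remaining : bigw h <= totw (wt h) (remaining h).
Proof.
rewrite /bigw /totw [X in X <= _]big_mkcond [X in _ <= X]big_mkcond /=.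
apply: ler_sum => x _; rewrite !inE; case: (boolP (x \in h)) => //= xh.
by case: ifP => // _; rewrite wt_ge0 // ltnW.
Qed.

Lemma dist_mass_le (A : {set 'I_k}) : A \subset remaining h ->
  0 < totw (wt h) (remaining h) ->
  \sum_(e in A) dist h e <= (1 + eps) * (totw (wt h) A / totw (wt h) (remaining h)).
Proof.
move=> /fintype.subsetP sA W_gt0; have [_ _ _ d_close _] := adv.2 h uh hk.
rewrite /totw mulr_suml mulr_sumr; apply: ler_sum => e eA.
by have /(d_close W_gt0)[] : e \notin h by have := sA e eA; rewrite inE.
Qed.

Lemma dist_mass_ge (A : {set 'I_k}) : A \subset remaining h ->
  0 < totw (wt h) (remaining h) ->
  (1 - eps) * (totw (wt h) A / totw (wt h) (remaining h)) <= \sum_(e in A) dist h e.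
Proof.
move=> /fintype.subsetP sA W_gt0; have [_ _ _ d_close _] := adv.2 h uh hk.
rewrite /totw mulr_suml mulr_sumr; apply: ler_sum => e eA.
by have /(d_close W_gt0)[] : e \notin h by have := sA e eA; rewrite inE.
Qed.

Lemma mean_step_factorE (a : bool) :
  \sum_e dist h e * step_factor ((e \in small h) && a) (e \in big h) =
  1 + a%:R * (\sum_(e in small h) dist h e) / 9 - (\sum_(e in big h) dist h e) / 2.
Proof.
have [_ _ d_sum _ _] := adv.2 h uh hk.
have mass_in (A : {set 'I_k}) : \sum_e dist h e * (e \in A)%:R = \sum_(e in A) dist h e.
  by rewrite [RHS]big_mkcond; apply: eq_bigr => e _; case: (e \in A); rewrite ?mulr1 ?mulr0.
transitivity (\sum_e (dist h e + a%:R * (dist h e * (e \in small h)%:R) / 9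
                      - dist h e * (e \in big h)%:R / 2)).
  by apply: eq_bigr => e _; rewrite /step_factor; case: a; case: (e \in small h) => /=; ring.
by rewrite sumrB big_split /= d_sum -!mulr_suml -mulr_sumr !mass_in.
Qed.

End Round.

Lemma prob_from_le_pot (A : seq 'I_k -> bool) (P : seq 'I_k -> R) :
  (forall h, uniq h -> size h = k -> (A h)%:R <= P h) ->
  (forall h, uniq h -> (size h < k)%N -> \sum_e dist h e * P (rcons h e) <= P h) ->
  forall n h, uniq h -> (size h + n)%N = k -> prob_from dist A n h <= P h.
Proof.
move=> P_full P_super; elim=> [|n IH] h uh hn /=.
  by apply: P_full; rewrite // -[size h]addn0.
have hk : (size h < k)%N by move: hn; lia.
apply: le_trans (P_super h uh hk); apply: mean_le => // e eh.
by rewrite IH ?rcons_uniq ?eh // size_rcons addSnnS.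
Qed.

Definition card_Sset h j := #|Sset wt h j|.

(* hit_time h m is i_m along h, and (size h).+1 if |S_i| never equals m. *)
Definition hit_time h m := first_hit (card_Sset h) (size h) m.

Lemma wB_bigw h j : wB wt h j = bigw (take j h).
Proof. by []. Qed.

Lemma card_Sset_slow h : uniq h -> (size h <= k)%N ->
  forall j, (j < size h)%N -> (card_Sset h j <= card_Sset h j.+1 + 1)%N.
Proof.
case: h => [|x0 t] // uh hk j jh.
rewrite /card_Sset /Sset (take_nth x0 jh).
apply: leq_trans (@card_small_rcons _ (nth x0 (x0 :: t) j) _ _) _.
- by rewrite -take_nth // take_uniq.
- by rewrite size_take jh (leq_trans jh).
- by rewrite leq_add2l leq_b1.
Qed.

Lemma card_Sset_rcons h e j : (j <= size h)%N ->
  card_Sset (rcons h e) j = card_Sset h j.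
Proof. by move=> jh; rewrite /card_Sset /Sset takel_rcons. Qed.

Lemma hit_time_rcons h e m : hit_time (rcons h e) m =
  if (hit_time h m <= size h)%N then hit_time h m
  else ((size h).+1 + (#|small (rcons h e)| != m))%N.
Proof.
rewrite /hit_time size_rcons first_hitS (@eq_first_hit _ (card_Sset h)).
  by rewrite /card_Sset -(size_rcons h e) /Sset take_size.
exact: card_Sset_rcons.
Qed.

Section BadPotential.
Variable l : nat.
Implicit Types (s : nat) (b : R).

Definition pot_exponent s b : R :=
  (l%:R - (minn s (2 * l))%:R) / 10 + (b - 4 * l%:R) / 80.

Definition pot s b : R := if b <= 4 * l%:R then 0 else expR (pot_exponent s b).

Lemma pot_ge0 s b : 0 <= pot s b.
Proof. by rewrite /pot; case: ifP => // _; rewrite expR_ge0. Qed.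

Lemma pot_exponent_step s s' b b' (inS inB : bool) :
  (s <= s' + inS)%N -> b' <= b - 80 * inB%:R ->
  pot_exponent s' b' <= pot_exponent s b + ((inS && (s <= 2 * l)%N)%:R / 10 - inB%:R).
Proof.
move=> ss' bb'; have : (minn s (2 * l) <= minn s' (2 * l) + (inS && (s <= 2 * l)%N))%N.
  by case: inS ss'; case: leqP => /=; lia.
rewrite -(ler_nat R) natrD /pot_exponent; lra.
Qed.

Lemma pot_step s s' b b' (inS inB : bool) : ~~ (inS && inB) ->
  (s <= s' + inS)%N -> b' <= b - 80 * inB%:R ->
  pot s' b' <= pot s b * step_factor (inS && (s <= 2 * l)%N) inB.
Proof.
move=> SB ss' bb'; rewrite {1}/pot; case: ifP => b'_le.
  by rewrite mulr_ge0 ?pot_ge0 ?step_factor_ge0.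
have b_gt : (b <= 4 * l%:R) = false.
  apply/negP => b_le; move/negP: b'_le; apply.
  by have := ler0n R inB; lra.
rewrite /pot b_gt; have := pot_exponent_step ss' bb'.
rewrite -ler_expR expRD => /le_trans; apply.
rewrite ler_wpM2l ?expR_ge0 // expR_le_step_factor //.
by apply: contra SB => /andP[/andP[-> _] ->].
Qed.

Lemma pot_init b : b <= 8 * l%:R -> pot (2 * l) b <= expR (- (l%:R / 40)).
Proof.
move=> b_le; rewrite /pot; case: ifP => _; first exact: expR_ge0.
by rewrite ler_expR /pot_exponent minnn natrM; have := ler0n R l; lra.
Qed.

Lemma indicator_le_pot b : (4 * l%:R < b)%R%:R <= pot l b.
Proof.
rewrite /pot ltNge; case: ifP => //= b_gt; rewrite -expR0 ler_expR /pot_exponent.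
by rewrite (_ : minn l (2 * l) = l); [move/negbT: b_gt; rewrite -ltNge; lra | lia].
Qed.

Lemma mean_step_factor_le1 h : 0 < eps -> eps < 1 / 2 ->
  uniq h -> (size h < k)%N -> 4 * l%:R < bigw h ->
  \sum_e dist h e * step_factor ((e \in small h) && (#|small h| <= 2 * l)%N) (e \in big h)
  <= 1.
Proof.
move=> eps_gt0 eps_lt_half uh hk b_gt; have [d_ge0 _ _ _ _] := adv.2 h uh hk.
have W_gt0 : 0 < totw (wt h) (remaining h).
  by have := bigw_le_remaining uh hk; have := ler0n R l; lra.
have pB := dist_mass_ge uh hk (big_sub_remaining h) W_gt0.
rewrite mean_step_factorE //; case: leqP => [s_le|_]; last first.
  have : 0 <= \sum_(e in big h) dist h e by rewrite sumr_ge0.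
  by rewrite !mul0r; lra.
have pS := dist_mass_le uh hk (small_sub_remaining h) W_gt0.
have S_le_B : totw (wt h) (small h) / totw (wt h) (remaining h) <=
              totw (wt h) (big h) / totw (wt h) (remaining h).
  apply: ler_wpM2r; first by rewrite invr_ge0 ltW.
  apply: le_trans (totw_small_le h) _.
  by move: s_le b_gt; rewrite -(ler_nat R) natrM /bigw; lra.
have S_ge0 : 0 <= totw (wt h) (small h) / totw (wt h) (remaining h).
  apply: divr_ge0; last exact: ltW.
  by apply: sumr_ge0 => e /[!inE] /andP[eh _]; rewrite wt_ge0 // ltnW.
rewrite /= mul1r; move: pS pB S_le_B S_ge0.
move: (totw _ (small h) / _) (totw _ (big h) / _) => x y.
move: (\sum_(e in small h) dist h e) (\sum_(e in big h) dist h e) => p q pS pB xy x0.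
have : (1 + eps) * x <= (1 + eps) * y by apply: ler_wpM2l => //; lra.
have : 0 <= y * (7 - 11 * eps) by apply: mulr_ge0; lra.
nra.
Qed.

Hypotheses (l_gt0 : (0 < l)%N) (small0_ge : (2 * l <= #|small [::]|)%N).

(* An upper bound on the probability that l turns out bad, given the history h. *)
Definition bad_pot h : R :=
  if (size h < hit_time h (2 * l))%N then expR (- (l%:R / 40))
  else if 8 * l%:R < bigw (take (hit_time h (2 * l)) h) then 0
  else if (hit_time h l <= size h)%N then (4 * l%:R < bigw (take (hit_time h l) h))%R%:R
  else pot #|small h| (bigw h).

Lemma hit_time_le h m : uniq h -> (size h <= k)%N ->
  (#|small h| <= m <= 2 * l)%N -> (hit_time h m <= size h)%N.
Proof.
move=> uh hk /andP[sm ml]; apply: first_hit_le_between => //.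
  exact: card_Sset_slow.
by rewrite /card_Sset /Sset take0 take_size sm (leq_trans ml).
Qed.

Lemma hit_time_double h : uniq h -> (size h <= k)%N ->
  (hit_time h l <= size h)%N -> (hit_time h (2 * l) <= hit_time h l)%N.
Proof.
move=> uh hk t1_le; apply: first_hit_le_between => //; first exact: card_Sset_slow.
by rewrite first_hit_eq // /card_Sset /Sset take0 small0_ge andbT leq_pmull.
Qed.

Lemma bad_pot_rcons_unstarted h e : uniq h -> (size h <= k)%N ->
  (size h < hit_time h (2 * l))%N -> bad_pot (rcons h e) <= expR (- (l%:R / 40)).
Proof.
move=> uh hk t2_gt; have t2E : hit_time h (2 * l) = (size h).+1.
  by apply/eqP; rewrite eqn_leq first_hit_leS.
have t1E : hit_time h l = (size h).+1.
  apply/eqP; rewrite eqn_leq first_hit_leS ltnNge; apply/negP => t1_le.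
  by move: t2_gt; rewrite ltnNge (leq_trans (hit_time_double uh hk t1_le)).
rewrite /bad_pot size_rcons !hit_time_rcons t2E t1E ltnn /=.
case: (eqVneq #|small (rcons h e)| (2 * l)) => [s2|_] /=; last by rewrite addn1 ltnSn.
rewrite addn0 ltnn; case: ifP => [_|b_le]; first exact: expR_ge0.
rewrite s2 (_ : 2 * l != l); last by apply/eqP; lia.
move: b_le; rewrite -(size_rcons h e) take_size => /negbT b_le.
by rewrite addn1 ltnn pot_init // leNgt.
Qed.

Lemma bad_pot_rcons_settled h e : (hit_time h (2 * l) <= size h)%N ->
  (8 * l%:R < bigw (take (hit_time h (2 * l)) h)) || (hit_time h l <= size h)%N ->
  bad_pot (rcons h e) = bad_pot h.
Proof.
move=> t2_le settled; rewrite /bad_pot size_rcons !hit_time_rcons t2_le.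
rewrite (takel_rcons _ t2_le) ltnNge (leqW t2_le) ltnNge t2_le /=.
case: ifP settled => //= _ t1_le.
by rewrite t1_le (leqW t1_le) (takel_rcons _ t1_le).
Qed.

Lemma bad_pot_rcons_active h e : (hit_time h (2 * l) <= size h)%N ->
  ~~ (8 * l%:R < bigw (take (hit_time h (2 * l)) h)) -> (size h < hit_time h l)%N ->
  bad_pot (rcons h e) <= pot #|small (rcons h e)| (bigw (rcons h e)).
Proof.
move=> t2_le b_le t1_gt; have t1E : hit_time h l = (size h).+1.
  by apply/eqP; rewrite eqn_leq first_hit_leS.
rewrite /bad_pot size_rcons !hit_time_rcons t2_le (takel_rcons _ t2_le).
rewrite ltnNge (leqW t2_le) (negbTE b_le) t1E ltnn /=.
case: (eqVneq #|small (rcons h e)| l) => [->|_] /=; last by rewrite addn1 ltnn.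
by rewrite addn0 leqnn -(size_rcons h e) take_size indicator_le_pot.
Qed.

Lemma bad_pot_super h : 0 < eps -> eps < 1 / 2 -> uniq h -> (size h < k)%N ->
  \sum_e dist h e * bad_pot (rcons h e) <= bad_pot h.
Proof.
move=> eps_gt0 eps_lt_half uh hk.
have uhe e : e \notin h -> uniq (rcons h e) by rewrite rcons_uniq uh andbT.
have [t2_gt|t2_le] := ltnP (size h) (hit_time h (2 * l)).
  rewrite {2}/bad_pot t2_gt -[X in _ <= X](mean_const uh hk).
  by apply: mean_le => // e _; apply: bad_pot_rcons_unstarted; rewrite // ltnW.
have [settled|] := boolP ((8 * l%:R < bigw (take (hit_time h (2 * l)) h)) ||
                          (hit_time h l <= size h)%N).
  rewrite -[X in _ <= X](mean_const uh hk).
  by apply: mean_le => // e _; rewrite bad_pot_rcons_settled.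
rewrite negb_or -ltnNge => /andP[b_le t1_gt].
have -> : bad_pot h = pot #|small h| (bigw h).
  by rewrite /bad_pot ltnNge t2_le /= (negbTE b_le) leqNgt t1_gt.
apply: le_trans (mean_le (Q := fun e => pot #|small h| (bigw h) *
  step_factor ((e \in small h) && (#|small h| <= 2 * l)%N) (e \in big h)) uh hk _) _.
  move=> e eh; apply: le_trans (bad_pot_rcons_active _ t2_le b_le t1_gt) _.
  apply: pot_step; first by apply/negP => /andP[/small_big_disjoint/negP].
    exact: card_small_rcons (uhe e eh) hk.
  exact: bigw_rcons (uhe e eh) hk.
under eq_bigr do rewrite mulrCA; rewrite -mulr_sumr.
have [b_le4|b_gt4] := leP (bigw h) (4 * l%:R); first by rewrite /pot b_le4 mul0r.
by rewrite -[X in _ <= X]mulr1 ler_wpM2l ?pot_ge0 // mean_step_factor_le1.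
Qed.

Lemma bad_pot_full h : uniq h -> size h = k -> (is_bad wt l h)%:R <= bad_pot h.
Proof.
move=> uh hk; have small_h : #|small h| = 0%N.
  have := subset_leq_card (small_sub_remaining h).
  by rewrite card_remaining // hk subnn leqn0 => /eqP.
have t_le m : (m <= 2 * l)%N -> (hit_time h m <= size h)%N.
  by move=> ml; apply: hit_time_le; rewrite ?hk ?small_h.
have first_idxE m : first_idx wt h m = hit_time h m.
  by rewrite /first_idx /hit_time /first_hit hk.
have t2_le := t_le _ (leqnn (2 * l)).
have t1_le := t_le _ (leq_pmull l (isT : (0 < 2)%N)).
rewrite /is_bad /bad_pot !first_idxE ltnNge t2_le t1_le !wB_bigw /=.
by case: (leP (bigw (take (hit_time h (2 * l)) h)) (8 * l%:R)).
Qed.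

Lemma bad_pot_nil : bad_pot [::] <= expR (- (l%:R / 40)).
Proof.
have hit_nil m : (hit_time [::] m <= 0)%N -> #|small [::]| = m.
  move=> t0; have := first_hit_eq t0; move: t0.
  by rewrite /hit_time leqn0 => /eqP -> <-.
rewrite /bad_pot /=; case: ifP => [_|/negbT]; first exact: lexx.
rewrite -leqNgt => /hit_nil s2; case: ifP => [_|/negbT b_le]; first exact: expR_ge0.
case: ifP => [/hit_nil s1|_]; first by move: s2 l_gt0; rewrite s1; lia.
by rewrite s2 pot_init // leNgt.
Qed.

End BadPotential.
End AdversarialSampling.

Theorem lemma4 (R : realType) (k : nat) (eps : R)
  (dist wt : seq 'I_k -> 'I_k -> R) :
  0 < eps -> eps < 1 / 2 ->
  valid_adversary eps dist wt ->
  \sum_e wt [::] e = k%:R ->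
  forall l : nat, (1 <= l)%N -> (l <= #|Sset wt [::] 0| %/ 2)%N ->
    prob dist (is_bad wt l) <= expR (- (l%:R / 40)).
Proof.
move=> eps_gt0 eps_lt_half adv _ l l_gt0 l_le.
have small0_ge : (2 * l <= #|small wt [::]|)%N.
  by move: l_le; rewrite (_ : #|Sset wt [::] 0| = #|small wt [::]|) //; lia.
apply: le_trans (bad_pot_nil l_gt0 small0_ge).
apply: (prob_from_le_pot adv) => // h.
- exact: (bad_pot_full adv small0_ge (h := h)).
- exact: (bad_pot_super adv l_gt0 small0_ge eps_gt0 eps_lt_half (h := h)).
Qed.
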